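(* Let $p,q,r\in(0,1/36)$, $h=8/15$, $a=3/15$, and let $\mathcal S_{pqr}=\{S_1,\dots,S_6\}$ be given by $S_1(x)=px$, $S_2(x)=a+rx$, $S_3(x)=h-qx$, $S_4(x)=h-r+rx$, $S_5(x)=1-a-rx$, $S_6(x)=1-r+rx$. If $\frac{\log p}{\log r}\notin\mathbb{Q}$, then $\mathcal S_{pqr}$ does not have the weak separation property, for every such $q$.
   Context: For a system $\mathcal S=\{S_1,\dots,S_m\}$ of similarities, let $F=\{S_{j_1}\circ\cdots\circ S_{j_n}: n\ge1, j_k\in\{1,\dots,m\}\}$ be the generated semigroup and $\mathcal F=\{g^{-1}\circ f: f,g\in F\}$ the associated family of similarities. $\mathcal S$ has the weak separation property (WSP) if $\mathrm{Id}$ is not a limit point of $\mathcal F\setminus\{\mathrm{Id}\}$, i.e. $\mathrm{Id}\notin\overline{\mathcal F\setminus\{\mathrm{Id}\}}$ (for similarities $x\mapsto \lambda x+b$ of $\mathbb{R}$, convergence means convergence of the coefficients $\lambda,b$). *)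

From Stdlib Require Import Reals List QArith.
Open Scope R_scope.

Definition sim := (R * R)%type.
Definition sim_apply (s : sim) (x : R) : R := fst s * x + snd s.
Definition sim_comp (s t : sim) : sim := (fst s * fst t, fst s * snd t + snd s).
(* inverse (for lam <> 0) *)
Definition sim_inv (s : sim) : sim := (/ fst s, - snd s / fst s).
Definition sim_id : sim := (1, 0).

Inductive in_semigroup (S : list sim) : sim -> Prop :=
| sg_base : forall s, In s S -> in_semigroup S s
| sg_step : forall s t, In s S -> in_semigroup S t -> in_semigroup S (sim_comp s t).

Definition in_family (S : list sim) (phi : sim) : Prop :=
  exists f g, in_semigroup S f /\ in_semigroup S g /\ phi = sim_comp (sim_inv g) f.

(* Id is a limit point of script F \ {Id} (convergence of coefficients) *)
Definition id_limit_point (S : list sim) : Prop :=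
  forall eps, 0 < eps -> exists phi, in_family S phi /\ phi <> sim_id /\
    Rabs (fst phi - 1) < eps /\ Rabs (snd phi) < eps.

Definition WSP (S : list sim) : Prop := ~ id_limit_point S.

Definition h_const : R := 8 / 15.
Definition a_const : R := 3 / 15.

Definition S_pqr (p q r : R) : list sim :=
  (p, 0) :: (r, a_const) :: (- q, h_const) :: (r, h_const - r)
  :: (- r, 1 - a_const) :: (r, 1 - r) :: nil.

(* The words f = S3 S1^M S5 and g = S4 S6^N S2 both have the form
   x |-> h - c (1 - a - r x), with c = q p^M and c = r^(N+1) respectively,
   so g^-1 f is the homothety of ratio q p^M / r^(N+1) centred at (1 - a) / r.
   When log p / log r is irrational, a subtractive Euclidean algorithm on
   -log p and -log r produces arbitrarily small nonzero combinations
   N log r - M log p, hence such combinations approximate every real number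
   with small nonzero error.  The ratios therefore tend to 1 without being 1,
   and the homotheties converge to the identity. *)

From Stdlib Require Import Reals QArith Lra Lia ZArith Classical List.
Open Scope R_scope.

Lemma exp_near_one (eps : R) : 0 < eps ->
  exists delta, 0 < delta /\ forall L, Rabs L < delta -> Rabs (exp L - 1) < eps.
Proof.
  intros Heps.
  destruct (derivable_continuous_pt exp 0 (derivable_pt_exp 0) eps Heps)
    as (delta & Hdelta & Hcont).
  exists delta; split; [exact Hdelta|].
  intros L HL. rewrite <- exp_0.
  destruct (Req_dec L 0) as [->|HL0].
  - rewrite Rminus_diag, Rabs_R0. exact Heps.
  - apply (Hcont L). split.
    + split; [exact I | auto].
    + simpl; unfold Rdist. rewrite Rminus_0_r. exact HL.
Qed.

Lemma nat_steps_cross_zero (v0 e : R) : v0 < 0 -> 0 < e ->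
  exists j : nat, 0 < v0 + INR j * e <= e.
Proof.
  intros Hv He. set (x := - v0 / e).
  assert (Hx : x * e = - v0) by (unfold x; field; lra).
  assert (Hxpos : 0 < x) by (unfold x; apply Rdiv_lt_0_compat; lra).
  destruct (archimed x) as [Hup1 Hup2].
  assert (Hup0 : (0 <= up x)%Z) by (apply le_IZR; lra).
  exists (Z.to_nat (up x)).
  rewrite INR_IZR_INZ, Z2Nat.id by exact Hup0.
  split.
  - assert (x * e < IZR (up x) * e) by (apply Rmult_lt_compat_r; lra). lra.
  - assert (IZR (up x) * e <= (x + 1) * e) by (apply Rmult_le_compat_r; lra). lra.
Qed.

Definition incommensurable (A B : R) : Prop :=
  forall n m : nat, INR n * B = INR m * A -> n = 0%nat /\ m = 0%nat.

Lemma incommensurable_of_irrational (x y : R) : x <> 0 -> y <> 0 ->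
  ~ (exists q : Q, x / y = Q2R q) -> incommensurable x y.
Proof.
  intros Hx Hy Hirr [|n] m E.
  - split; [reflexivity|].
    rewrite Rmult_0_l in E. symmetry in E.
    destruct (Rmult_integral _ _ E) as [Hm|]; [|contradiction].
    apply INR_eq. exact Hm.
  - exfalso. pose proof (not_0_INR (S n) (Nat.neq_succ_0 n)) as Hn.
    destruct m as [|m].
    + rewrite Rmult_0_l in E.
      destruct (Rmult_integral _ _ E); contradiction.
    + pose proof (not_0_INR (S m) (Nat.neq_succ_0 m)) as Hm.
      apply Hirr. exists (Z.of_nat (S n) # Pos.of_succ_nat m).
      unfold Q2R; cbn [Qnum Qden].
      rewrite Zpos_P_of_succ_nat, <- Nat2Z.inj_succ, <- !INR_IZR_INZ.
      field_simplify_eq; [|split; assumption].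
      rewrite Rmult_comm, <- E. ring.
Qed.

Section IncommensurableCombinations.

Variables A B : R.
Hypothesis A_pos : 0 < A.
Hypothesis B_pos : 0 < B.
Hypothesis AB_incomm : incommensurable A B.

Definition nat_comb (n m : nat) : R := INR n * B - INR m * A.

Lemma nat_combD n1 m1 n2 m2 :
  nat_comb (n1 + n2) (m1 + m2) = nat_comb n1 m1 + nat_comb n2 m2.
Proof. unfold nat_comb. rewrite !plus_INR. ring. Qed.

Lemma nat_combM j n m : nat_comb (j * n) (j * m) = INR j * nat_comb n m.
Proof. unfold nat_comb. rewrite !mult_INR. ring. Qed.

Lemma nat_comb_eq0 n m : nat_comb n m = 0 -> n = 0%nat /\ m = 0%nat.
Proof. unfold nat_comb. intros E. apply AB_incomm. lra. Qed.

(* Subtractive Euclidean algorithm: under the gap hypothesis, a pair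
   u >= d >= -v is replaced by (u + v, v) or (u, u + v) according to the
   sign of u + v; since |u + v| >= d, the width u - v drops by at least d. *)
Lemma gap_brackets (d : R) : 0 < d ->
  (forall n m, nat_comb n m <> 0 -> d <= Rabs (nat_comb n m)) ->
  forall K : nat, exists n1 m1 n2 m2,
    d <= nat_comb n1 m1 /\ nat_comb n2 m2 <= - d /\
    nat_comb n1 m1 - nat_comb n2 m2 <= A + B - INR K * d.
Proof.
  intros Hd Hgap K. induction K as [|K IH].
  - exists 1%nat, 0%nat, 0%nat, 1%nat.
    assert (HB : nat_comb 1 0 = B) by (unfold nat_comb; simpl; ring).
    assert (HA : nat_comb 0 1 = - A) by (unfold nat_comb; simpl; ring).
    pose proof (Hgap 1%nat 0%nat) as H1. pose proof (Hgap 0%nat 1%nat) as H2.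
    rewrite HB, Rabs_right in H1 by lra. rewrite HA, Rabs_Ropp, Rabs_right in H2 by lra.
    assert (d <= B) by (apply H1; lra). assert (d <= A) by (apply H2; lra).
    rewrite HA, HB. simpl. repeat split; lra.
  - destruct IH as (n1 & m1 & n2 & m2 & Hu & Hv & Hw).
    pose proof (nat_combD n1 m1 n2 m2) as Hsum.
    assert (Hne : nat_comb (n1 + n2) (m1 + m2) <> 0).
    { intros Hz. destruct (nat_comb_eq0 _ _ Hz) as [Hn Hm].
      assert (n1 = 0%nat /\ m1 = 0%nat) as [-> ->] by lia.
      unfold nat_comb in Hu. simpl in Hu. lra. }
    pose proof (Hgap _ _ Hne) as Hdw.
    rewrite S_INR.
    destruct (Rle_or_lt 0 (nat_comb (n1 + n2) (m1 + m2))) as [Hpos|Hneg].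
    + rewrite Rabs_right in Hdw by lra.
      exists (n1 + n2)%nat, (m1 + m2)%nat, n2, m2. repeat split; lra.
    + rewrite Rabs_left in Hdw by lra.
      exists n1, m1, (n1 + n2)%nat, (m1 + m2)%nat. repeat split; lra.
Qed.

Lemma nat_comb_small (d : R) : 0 < d ->
  exists n m, 0 < Rabs (nat_comb n m) < d.
Proof.
  intros Hd. apply NNPP. intros Hno.
  assert (Hgap : forall n m, nat_comb n m <> 0 -> d <= Rabs (nat_comb n m)).
  { intros n m Hnz. apply Rnot_lt_le. intros Hlt. apply Hno.
    exists n, m. split; [apply Rabs_pos_lt|]; assumption. }
  destruct (INR_archimed d (A + B) Hd) as [K HK].
  destruct (gap_brackets d Hd Hgap K) as (n1 & m1 & n2 & m2 & Hu & Hv & Hw).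
  lra.
Qed.

Lemma nat_comb_dense (c d : R) : 0 < d ->
  exists n m, 0 < Rabs (c + nat_comb n m) < d.
Proof.
  intros Hd. destruct (nat_comb_small d Hd) as (n & m & Hsmall).
  set (e := nat_comb n m) in *.
  destruct (Rle_or_lt e 0) as [Hneg|Hpos].
  - assert (He : e < 0).
    { destruct Hneg as [|He0]; [assumption|]. rewrite He0, Rabs_R0 in Hsmall. lra. }
    rewrite Rabs_left in Hsmall by exact He.
    destruct (INR_archimed B (- c) B_pos) as [K HK].
    destruct (nat_steps_cross_zero (- (c + INR K * B)) (- e)) as [j Hj]; [lra | lra |].
    exists (K + j * n)%nat, (0 + j * m)%nat.
    rewrite nat_combD, nat_combM. fold e.
    replace (nat_comb K 0) with (INR K * B) by (unfold nat_comb; simpl; ring).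
    rewrite Rabs_left by lra. lra.
  - rewrite Rabs_right in Hsmall by lra.
    destruct (INR_archimed A c A_pos) as [K HK].
    destruct (nat_steps_cross_zero (c - INR K * A) e) as [j Hj]; [lra | lra |].
    exists (0 + j * n)%nat, (K + j * m)%nat.
    rewrite nat_combD, nat_combM. fold e.
    replace (nat_comb 0 K) with (- (INR K * A)) by (unfold nat_comb; simpl; ring).
    rewrite Rabs_right by lra. lra.
Qed.

End IncommensurableCombinations.

Lemma ratios_approach_one (p q r : R) :
  0 < p < 1 -> 0 < q -> 0 < r < 1 -> incommensurable (- ln p) (- ln r) ->
  forall delta, 0 < delta ->
    exists M N : nat, 0 < Rabs (q * p ^ M / r ^ S N - 1) < delta.
Proof.
  intros Hp Hq Hr Hincomm delta Hdelta.
  assert (Hlp : 0 < - ln p) by (pose proof (ln_increasing p 1); rewrite ln_1 in *; lra).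
  assert (Hlr : 0 < - ln r) by (pose proof (ln_increasing r 1); rewrite ln_1 in *; lra).
  destruct (exp_near_one delta Hdelta) as (eta & Heta & Hexp).
  destruct (nat_comb_dense _ _ Hlp Hlr Hincomm (ln (q / r)) eta Heta) as (N & M & HL).
  set (L := ln (q / r) + nat_comb (- ln p) (- ln r) N M) in *.
  assert (Hratio : q * p ^ M / r ^ S N = exp L).
  { assert (0 < p ^ M) by (apply pow_lt; lra).
    assert (0 < r ^ S N) by (apply pow_lt; lra).
    rewrite <- (exp_ln (q * p ^ M / r ^ S N)) by (apply Rdiv_lt_0_compat; nra).
    f_equal. unfold L, nat_comb, Rdiv.
    rewrite !ln_mult, !ln_Rinv, !ln_pow, S_INR by first [apply Rinv_0_lt_compat; lra | nra].
    ring. }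
  exists M, N. rewrite Hratio. split.
  - apply Rabs_pos_lt. intros Hone.
    assert (HL0 : L = 0) by (rewrite <- (ln_exp L), <- ln_1; f_equal; lra).
    rewrite HL0, Rabs_R0 in HL. lra.
  - apply Hexp. lra.
Qed.

Fixpoint sim_iter (s : sim) (k : nat) (t : sim) : sim :=
  match k with O => t | S k => sim_comp s (sim_iter s k t) end.

Lemma in_semigroup_iter (S : list sim) (s t : sim) (k : nat) :
  In s S -> in_semigroup S t -> in_semigroup S (sim_iter s k t).
Proof.
  intros Hs Ht. induction k as [|k IH]; simpl; [exact Ht|].
  apply sg_step; assumption.
Qed.

(* (rho, c) with c = z (1 - rho) is the homothety of ratio rho centred at z. *)
Lemma sim_iter_homothety (rho z c : R) (k : nat) (l b : R) : c = z * (1 - rho) ->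
  sim_iter (rho, c) k (l, b) = (rho ^ k * l, z - rho ^ k * (z - b)).
Proof.
  intros Hc. induction k as [|k IH]; simpl.
  - f_equal; ring.
  - rewrite IH. unfold sim_comp; simpl. rewrite Hc. f_equal; ring.
Qed.

Lemma sim_inv_comp_common_affine (c c' r h b : R) : c' <> 0 -> r <> 0 ->
  sim_comp (sim_inv (c' * r, h - c' * b)) (c * r, h - c * b)
  = (c / c', b / r * (1 - c / c')).
Proof.
  intros Hc' Hr. unfold sim_comp, sim_inv; simpl. f_equal; field; split; assumption.
Qed.

Section SystemWords.

Variables p q r : R.

Definition word_f (M : nat) : sim :=
  sim_comp (- q, h_const) (sim_iter (p, 0) M (- r, 1 - a_const)).

Definition word_g (N : nat) : sim :=
  sim_comp (r, h_const - r) (sim_iter (r, 1 - r) N (r, a_const)).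

Lemma word_f_in M : in_semigroup (S_pqr p q r) (word_f M).
Proof.
  apply sg_step; [simpl; tauto|].
  apply in_semigroup_iter; [simpl; tauto|]. apply sg_base. simpl; tauto.
Qed.

Lemma word_g_in N : in_semigroup (S_pqr p q r) (word_g N).
Proof.
  apply sg_step; [simpl; tauto|].
  apply in_semigroup_iter; [simpl; tauto|]. apply sg_base. simpl; tauto.
Qed.

Lemma word_fE M :
  word_f M = (q * p ^ M * r, h_const - q * p ^ M * (1 - a_const)).
Proof.
  unfold word_f. rewrite (sim_iter_homothety p 0) by ring.
  unfold sim_comp; simpl. f_equal; ring.
Qed.

Lemma word_gE N :
  word_g N = (r ^ S N * r, h_const - r ^ S N * (1 - a_const)).
Proof.
  unfold word_g. rewrite (sim_iter_homothety r 1) by ring.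
  unfold sim_comp; simpl. f_equal; ring.
Qed.

Hypothesis r_pos : 0 < r.

Lemma id_limit_point_of_ratios :
  (forall delta, 0 < delta ->
     exists M N : nat, 0 < Rabs (q * p ^ M / r ^ S N - 1) < delta) ->
  id_limit_point (S_pqr p q r).
Proof.
  intros Hratios eps Heps.
  set (x0 := (1 - a_const) / r).
  assert (Hx0 : 0 < x0) by (unfold x0, a_const; apply Rdiv_lt_0_compat; lra).
  destruct (Hratios (eps / (1 + x0))) as (M & N & Hlam).
  { apply Rdiv_lt_0_compat; lra. }
  assert (Heps' : eps / (1 + x0) * (1 + x0) = eps) by (field; lra).
  set (lam := q * p ^ M / r ^ S N) in *.
  assert (Hphi : sim_comp (sim_inv (word_g N)) (word_f M) = (lam, x0 * (1 - lam))).
  { rewrite word_fE, word_gE, sim_inv_comp_common_affine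
      by (try apply pow_nonzero; lra).
    reflexivity. }
  exists (lam, x0 * (1 - lam)); simpl.
  split; [|split; [|split]].
  - exists (word_f M), (word_g N).
    split; [apply word_f_in | split; [apply word_g_in | symmetry; exact Hphi]].
  - intros Hid. injection Hid as Hone _.
    rewrite Hone, Rminus_diag, Rabs_R0 in Hlam. lra.
  - assert (eps / (1 + x0) < eps) by nra. lra.
  - rewrite Rabs_mult, Rabs_right, Rabs_minus_sym by lra. nra.
Qed.

End SystemWords.

Theorem lemma1 : forall p q r : R,
  0 < p < 1 / 36 -> 0 < q < 1 / 36 -> 0 < r < 1 / 36 ->
  ~ (exists x : Q, ln p / ln r = Q2R x) ->
  ~ WSP (S_pqr p q r).
Proof.
  intros p q r Hp Hq Hr Hirr HWSP. apply HWSP.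
  assert (Hlp : ln p < 0) by (rewrite <- ln_1; apply ln_increasing; lra).
  assert (Hlr : ln r < 0) by (rewrite <- ln_1; apply ln_increasing; lra).
  assert (Hincomm : incommensurable (- ln p) (- ln r)).
  { apply incommensurable_of_irrational; try lra.
    replace (- ln p / - ln r) with (ln p / ln r) by (field; lra). exact Hirr. }
  apply id_limit_point_of_ratios; [lra |].
  apply ratios_approach_one; [lra | lra | lra | exact Hincomm].
Qed.
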